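(* Let $p$ be an odd prime, $t,s$ positive integers with $p\nmid s$, $r=p^t$, $q=r^s$. Let $\eta$ be the quadratic multiplicative character of $\mathbb{F}_r$ (with $\eta(0)=0$), let $\varphi$ be a nontrivial multiplicative character of $\mathbb{F}_q$, and let $\overline{\varphi}^*$ denote the restriction of $\overline{\varphi}$ to $\mathbb{F}_r^*$. Put $$A=\sum_{x\in\mathbb{F}_q^*}\varphi(x)\,\eta(\mathrm{Tr}_{q/r}(x+1)).$$ Then $|A|=\sqrt q$ if the character $\eta\overline{\varphi}^*$ of $\mathbb{F}_r^*$ is nontrivial, and $|A|=\sqrt{q}/\sqrt{r}$ if $\eta\overline{\varphi}^*$ is trivial.
   Context: $\mathrm{Tr}_{q/r}$ is the trace map from $\mathbb{F}_q$ to $\mathbb{F}_r$. A multiplicative character of $\mathbb{F}_q$ is a homomorphism $\mathbb{F}_q^*\to\mathbb{C}^*$; $\overline{\varphi}$ is its complex conjugate; it is trivial if identically $1$. *)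

From HB Require Import structures.
From mathcomp Require Import all_boot all_order all_algebra all_field.
Set Implicit Arguments. Unset Strict Implicit. Unset Printing Implicit Defensive.
Import GRing.Theory Num.Theory.
Local Open Scope ring_scope.

(* F plays the role of F_q; F_r is the subfield {y : F | y^r = y}. *)

Definition trace (F : finFieldType) (r s : nat) (x : F) : F :=
  \sum_(i < s) x ^+ (r ^ i).

Definition in_subfield (F : finFieldType) (r : nat) (y : F) : bool := y ^+ r == y.

(* quadratic character eta of F_r (with eta 0 = 0), evaluated on elements of F_r *)
Definition qchar (F : finFieldType) (r : nat) (y : F) : algC :=
  if y == 0 then 0
  else if [exists z : F, in_subfield r z && (z * z == y)] then 1 else -1.

Definition mult_char (F : finFieldType) (phi : F -> algC) : Prop :=
  (forall x y : F, x != 0 -> y != 0 -> phi (x * y) = phi x * phi y) /\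
  (forall x : F, x != 0 -> phi x != 0).

Definition nontrivial_char (F : finFieldType) (phi : F -> algC) : Prop :=
  exists x : F, x != 0 /\ phi x != 1.

From HB Require Import structures.
From mathcomp Require Import all_boot all_order all_algebra all_field.
From mathcomp Require Import ring.

(* Write F_r = {y | y^r = y}, S(a) for the sum of phi over the nonzero x with
   Tr(x) = a, and J(b) = sum_{a in F_r^*} eta(a + b) phi(a).  Since Tr(x + 1) =
   Tr(x) + s and S(a) = phi(a) S(1) for a in F_r^*, grouping A by the trace gives
   A = eta(s) S(0) + S(1) J(s).  The trace is F_r-linear and onto, so it has
   fibres of size q/r; this yields sum_a S(a) = 0 and sum_a |S(a)|^2 = q - q/r.
   The correlation sum_b eta(a + b) eta(a' + b) = r [a = a'] - 1 yields
   sum_b |J(b)|^2 = r (r - 1) - |sum_{F_r^*} phi|^2, while J(0) is the sum of the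
   character eta phi over F_r^*.  Solving these relations for |S(1)| and |J(1)|
   gives |A|^2 = q, except when eta phibar is trivial on F_r^*, where
   |A|^2 = q/r. *)

Import Order.TTheory GRing.Theory Num.Theory.
Local Open Scope ring_scope.
Set Implicit Arguments. Unset Strict Implicit. Unset Printing Implicit Defensive.

Lemma dvdp_Xn_sub1 (R : idomainType) (m n : nat) :
  (m %| n)%N -> ('X^m - 1 : {poly R}) %| 'X^n - 1.
Proof.
by case/dvdnP=> k ->; rewrite mulnC exprM [X in _ %| X]subrX1 dvdp_mulIl.
Qed.

(* 'X^n - 1 divides 'X^#|F| - 'X, the product of all 'X - x. *)
Lemma card_rootsXn_sub1 (F : finFieldType) (n : nat) :
  (0 < n)%N -> (n %| #|F|.-1)%N -> #|[pred x : F | x ^+ n == 1]| = n.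
Proof.
move=> n_gt0 n_dvd.
have : 'X^n - 1 %| \prod_(x : F) ('X - x%:P).
  rewrite -finField_genPoly -(ltn_predK (finNzRing_gt1 F)) exprS.
  by rewrite -[X in _ * _ - X]mulr1 -mulrBr dvdp_mull ?dvdp_Xn_sub1.
case/dvdp_prod_XsubC=> m eq_m.
have uniq_m : uniq (mask m (index_enum F)) by rewrite mask_uniq ?index_enum_uniq.
transitivity #|mask m (index_enum F)|.
  apply: eq_card => x; rewrite inE -root_prod_XsubC -(eqp_root eq_m).
  by rewrite rootE !hornerE subr_eq0.
rewrite (card_uniqP uniq_m); apply: succn_inj.
by rewrite -(size_prod_XsubC _ id) -(eqp_size eq_m) size_Xn_sub_1.
Qed.

Lemma card_sqr_imset (F : finFieldType) (A : {set F}) :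
  (#|A| <= 2 * #|[set (z * z)%R | z in A]|)%N.
Proof.
rewrite -sum1_card (partition_big_imset (fun z => z * z)) mulnC -sum_nat_const.
apply: leq_sum => _ /imsetP[w _ ->]; rewrite sum1dep_card.
apply: leq_trans (_ : #|[set w; - w]| <= 2)%N; last by rewrite cards2; case: (_ != _).
by apply/subset_leq_card/subsetP => z; rewrite !inE -!expr2 eqf_sqr => /andP[].
Qed.

Lemma natr_pred (R : pzRingType) n : (0 < n)%N -> n.-1%:R = n%:R - 1 :> R.
Proof. by move=> n_gt0; rewrite -[in RHS](prednK n_gt0) mulrSr addrK. Qed.

Lemma sum_mult_eq0 (F : finFieldType) (A : {pred F}) (chi : F -> algC) a :
    a != 0 -> (forall x, (a * x \in A) = (x \in A)) ->
    {in A, forall x, chi (a * x) = chi a * chi x} -> chi a != 1 ->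
  \sum_(x in A) chi x = 0.
Proof.
move=> a_neq0 A_mull chiM chi_a_neq1; set S := \sum_(x in A) chi x.
have def_S : S = chi a * S.
  rewrite {1}/S (reindex_inj (mulfI a_neq0)) mulr_sumr /=.
  by apply: eq_big => [x | x]; rewrite A_mull //; exact: chiM.
have : (1 - chi a) * S == 0 by rewrite mulrBl mul1r -def_S subrr.
by rewrite mulf_eq0 subr_eq0 eq_sym (negbTE chi_a_neq1) => /eqP.
Qed.

Lemma trace1 (F : finFieldType) r s : trace r s (1 : F) = s%:R.
Proof.
by rewrite /trace (eq_bigr (fun _ => 1)) => [|i _]; rewrite ?sumr_const ?card_ord ?expr1n.
Qed.

Lemma qchar0 (F : finFieldType) r : qchar r (0 : F) = 0.
Proof. by rewrite /qchar eqxx. Qed.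

Lemma qchar_sqr (F : finFieldType) r (y : F) : y != 0 -> qchar r y ^+ 2 = 1.
Proof. by move=> y_neq0; rewrite /qchar (negbTE y_neq0); case: ifP; rewrite ?sqrrN expr1n. Qed.

Lemma norm_qchar (F : finFieldType) r (y : F) : y != 0 -> `|qchar r y| = 1.
Proof. by move=> y_neq0; rewrite /qchar (negbTE y_neq0); case: ifP; rewrite ?normrN normr1. Qed.

Lemma algC_N1_neq1 : (-1 : algC) != 1.
Proof. by rewrite lt_eqF // (lt_trans (ltrN10 _) ltr01). Qed.

Lemma conjC_qchar (F : finFieldType) r (y : F) : (qchar r y)^* = qchar r y.
Proof. by rewrite /qchar; case: ifP; rewrite ?conjC0 //; case: ifP; rewrite ?conjC1 ?conjCN1. Qed.

Section MultiplicativeCharacter.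

Variables (F : finFieldType) (phi : F -> algC).
Hypothesis phiM : mult_char phi.

Lemma mult_char1 : phi 1 = 1.
Proof.
have [phiM' phi_neq0] := phiM; apply: (mulfI (phi_neq0 1 (oner_neq0 _))).
by rewrite -phiM' ?oner_neq0 // !mulr1.
Qed.

Lemma mult_charX x n : x != 0 -> phi (x ^+ n) = phi x ^+ n.
Proof.
move=> x_neq0; elim: n => [|n IHn]; first by rewrite !expr0 mult_char1.
by rewrite !exprS phiM.1 ?IHn ?expf_neq0.
Qed.

Lemma norm_mult_char x : x != 0 -> `|phi x| = 1.
Proof.
move=> x_neq0; have card_gt0 : (0 < #|F|.-1)%N.
  by rewrite -ltnS (ltn_predK (finNzRing_gt1 F)) finNzRing_gt1.
apply/eqP; rewrite -(pexpr_eq1 card_gt0) // -normrX -mult_charX //.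
rewrite -[X in phi X](mulKf x_neq0) -exprS (ltn_predK (finNzRing_gt1 F)).
by rewrite expf_card mulVf // mult_char1 normr1.
Qed.

Lemma mult_char_mul_conjC x : x != 0 -> phi x * (phi x)^* = 1.
Proof. by move=> x_neq0; rewrite -normCK norm_mult_char ?expr1n. Qed.

Lemma sum_mult_char_eq0 : nontrivial_char phi -> \sum_(x | x != 0) phi x = 0.
Proof.
case=> g [g_neq0 phi_g_neq1].
apply: (sum_mult_eq0 (A := predC1 0) g_neq0) => [x | x x_neq0 | //].
  by rewrite !inE mulf_eq0 negb_or g_neq0.
exact: phiM.1.
Qed.

End MultiplicativeCharacter.

Section FixedField.

Variables (F : finFieldType) (r s : nat).
Hypotheses (r_gt1 : (1 < r)%N) (s_gt0 : (0 < s)%N) (cardF : #|F| = (r ^ s)%N).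
(* That is, r is a power of the characteristic of F. *)
Hypothesis exprD_r : forall x y : F, (x + y) ^+ r = x ^+ r + y ^+ r.

Definition Fr : {set F} := [set x | in_subfield r x].
Definition Frx : {set F} := Fr :\ 0.

Lemma dvdn_predr_card : (r.-1 %| #|F|.-1)%N.
Proof. by rewrite cardF predn_exp dvdn_mulr. Qed.

Lemma r_gt0 : (0 < r)%N.
Proof. exact: ltnW. Qed.

Lemma predr_gt0 : (0 < r.-1)%N.
Proof. by rewrite -ltnS (ltn_predK r_gt1). Qed.

Lemma in_Frx x : (x \in Frx) = (x ^+ r.-1 == 1).
Proof.
rewrite !inE /in_subfield -{1}(ltn_predK r_gt1) exprS.
have [-> | x_neq0] := eqVneq x 0; first by rewrite !expr0n eqn0Ngt predr_gt0 /= eq_sym oner_eq0.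
by rewrite /= -[X in _ == X]mulr1 (inj_eq (mulfI x_neq0)).
Qed.

Lemma card_Frx : #|Frx| = r.-1.
Proof.
rewrite -(card_rootsXn_sub1 predr_gt0 dvdn_predr_card).
by apply: eq_card => x; rewrite in_Frx inE.
Qed.

Lemma expr0_r : 0 ^+ r = 0 :> F.
Proof. by rewrite expr0n gtn_eqF // ltnW. Qed.

Lemma Fr0 : 0 \in Fr.
Proof. by rewrite inE /in_subfield expr0_r. Qed.

Lemma card_Fr : #|Fr| = r.
Proof. by rewrite (cardsD1 0) Fr0 -/Frx card_Frx add1n (ltn_predK r_gt1). Qed.

Lemma Fr1 : 1 \in Fr.
Proof. by rewrite inE /in_subfield expr1n. Qed.

Lemma FrD : {in Fr &, forall x y, x + y \in Fr}.
Proof. by move=> x y; rewrite !inE /in_subfield exprD_r => /eqP-> /eqP->. Qed.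

Lemma FrN : {in Fr, forall x, - x \in Fr}.
Proof.
move=> x; rewrite !inE /in_subfield => /eqP x_r.
by rewrite -addr_eq0 -{2}x_r -exprD_r addNr expr0_r.
Qed.

Lemma FrM : {in Fr &, forall x y, x * y \in Fr}.
Proof. by move=> x y; rewrite !inE /in_subfield exprMn => /eqP-> /eqP->. Qed.

Lemma FrV : {in Fr, forall x, x^-1 \in Fr}.
Proof. by move=> x; rewrite !inE /in_subfield exprVn => /eqP->. Qed.

Lemma Fr_exprX c i : c \in Fr -> c ^+ (r ^ i) = c.
Proof.
rewrite inE => /eqP c_r; elim: i => [|i IHi]; first by rewrite expr1.
by rewrite expnS mulnC exprM IHi c_r.
Qed.

Lemma Frx_mull a x : a \in Frx -> (a * x \in Frx) = (x \in Frx).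
Proof.
case/setD1P=> a_neq0 Fr_a; rewrite !in_setD1 mulf_eq0 negb_or a_neq0 /=.
have [x_neq0 /= | //] := boolP (x != 0).
apply/idP/idP => [Fr_ax | /(FrM Fr_a)//].
by rewrite -(mulKf a_neq0 x) FrM ?FrV.
Qed.

Lemma exprD_rX i (x y : F) : (x + y) ^+ (r ^ i) = x ^+ (r ^ i) + y ^+ (r ^ i).
Proof. by elim: i => [|i IHi]; rewrite ?expr1 // expnS mulnC !exprM IHi exprD_r. Qed.

Lemma traceD : {morph @trace F r s : x y / x + y}.
Proof. by move=> x y; rewrite /trace -big_split; apply: eq_bigr => i _; rewrite exprD_rX. Qed.

Lemma trace0 : trace r s 0 = 0 :> F.
Proof. by apply: (addIr (trace r s 0)); rewrite -traceD !add0r. Qed.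

Lemma traceB x y : trace r s (x - y) = trace r s x - trace r s y :> F.
Proof.
rewrite traceD; congr (_ + _); apply/eqP.
by rewrite -addr_eq0 -traceD addNr trace0.
Qed.

Lemma traceZ c x : c \in Fr -> trace r s (c * x) = c * trace r s x.
Proof.
by move=> Fr_c; rewrite /trace mulr_sumr; apply: eq_bigr => i _; rewrite exprMn Fr_exprX.
Qed.

Lemma trace_Fr x : trace r s x \in Fr.
Proof.
rewrite inE /in_subfield /trace (big_morph _ exprD_r expr0_r).
under eq_bigr => i _ do rewrite -exprM -expnSr.
move: s_gt0 cardF; case: s => // n _ cardF'.
rewrite big_ord_recr big_ord_recl /= -cardF' expf_card expn0 expr1 addrC.
by apply/eqP; congr (_ + _); apply: eq_bigr => i _; rewrite -expnSr.
Qed.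

(* Tr is a nonzero polynomial function of degree r ^ s.-1 < #|F|. *)
Lemma exists_trace_neq0 : exists x : F, trace r s x != 0.
Proof.
pose P : {poly F} := \sum_(i < s) 'X^(r ^ i).
have traceE x : trace r s x = P.[x].
  by rewrite horner_sum; apply: eq_bigr => i _; rewrite hornerXn.
have P_neq0 : P != 0.
  apply/eqP => /(congr1 (fun Q : {poly F} => Q`_(r ^ s.-1))); apply/eqP.
  have s1_lt_s : (s.-1 < s)%N by rewrite ltn_predL.
  rewrite coef0 coef_sum (bigD1 (Ordinal s1_lt_s)) //=.
  rewrite coefXn eqxx big1 ?addr0 ?oner_eq0 // => i neq_i.
  by rewrite coefXn eqn_exp2l // eq_sym; move: neq_i; rewrite -val_eqE => /negbTE->.
have size_P : (size P <= (r ^ s.-1).+1)%N.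
  apply/leq_sizeP => j lt_j; rewrite coef_sum big1 // => i _.
  have le_ri : (r ^ i <= r ^ s.-1)%N by rewrite leq_exp2l // -ltnS prednK.
  by rewrite coefXn gtn_eqF // (leq_ltn_trans le_ri lt_j).
case: (pickP (fun x : F => trace r s x != 0)) => [x trace_x_neq0 | trace_eq0]; first by exists x.
have P_roots : all (root P) (enum F).
  by apply/allP => x _; rewrite /root -traceE; apply/negbFE/trace_eq0.
have := leq_trans (max_poly_roots P_neq0 P_roots (enum_uniq F)) size_P.
by rewrite -cardE cardF ltnS leq_exp2l // leqNgt ltn_predL s_gt0.
Qed.

Lemma card_trace_fiber a : a \in Fr -> #|[set x : F | trace r s x == a]| = (r ^ s.-1)%N.
Proof.
have [x1 trace_x1_neq0] := exists_trace_neq0.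
have card_fiber b : b \in Fr ->
    #|[set x : F | trace r s x == b]| = #|[set x : F | trace r s x == 0]|.
  move=> Fr_b; pose x0 := b / trace r s x1 * x1.
  have trace_x0 : trace r s x0 = b by rewrite traceZ ?divfK // FrM ?FrV ?trace_Fr.
  rewrite -(card_preimset _ (addIr x0)); apply: eq_card => x.
  by rewrite !inE traceD trace_x0 -{2}[b]add0r (inj_eq (addIr b)).
have card_F : (r * #|[set x : F | trace r s x == 0%R]|)%N = #|F|.
  rewrite -{1}card_Fr -sum_nat_const -[RHS]sum1_card.
  rewrite [RHS](partition_big (trace r s) (mem Fr)) => [|x _]; last exact: trace_Fr.
  apply: eq_bigr => b Fr_b; rewrite -(card_fiber b) // -sum1_card.
  by apply: eq_bigl => x; rewrite inE.
move=> Fr_a; apply/eqP; rewrite card_fiber // -(eqn_pmul2l (ltnW r_gt1)) card_F.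
by rewrite cardF -expnS prednK.
Qed.

Lemma card_trace_mul_eq0 c :
  #|[set y : F | (y != 0) && (trace r s (y * c) == 0)]| =
    if c == 0 then #|F|.-1 else (r ^ s.-1).-1.
Proof.
have [-> | c_neq0] := eqVneq c 0.
  by rewrite -(cardC1 0); apply: eq_card => y; rewrite !inE mulr0 trace0 eqxx andbT.
rewrite -(card_trace_fiber Fr0) [in RHS](cardsD1 0) inE trace0 eqxx add1n /=.
rewrite -[RHS](card_preimset _ (mulIf c_neq0)); apply: eq_card => y.
by rewrite !inE mulf_eq0 (negbTE c_neq0) orbF.
Qed.

Lemma partition_trace (G : F -> algC) :
  \sum_(x | x != 0) G x = \sum_(a in Fr) \sum_(x | (x != 0) && (trace r s x == a)) G x.
Proof. by apply: partition_big => x _; exact: trace_Fr. Qed.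

Definition trivial_on_Frx (chi : F -> algC) := [forall a in Frx, chi a == 1].

Lemma s_in_Frx : s%:R != 0 :> F -> s%:R \in Frx.
Proof. by move=> s_neq0; apply/setD1P; split => //; rewrite -(trace1 F r); exact: trace_Fr. Qed.

Lemma natr_exp_s (R : pzSemiRingType) : (r ^ s)%:R = r%:R * (r ^ s.-1)%:R :> R.
Proof. by rewrite -natrM -expnS prednK. Qed.

Lemma natr_predr_neq0 (R : numDomainType) : r.-1%:R != 0 :> R.
Proof. by rewrite pnatr_eq0 -lt0n predr_gt0. Qed.

Lemma sum_mult_Frx (chi : F -> algC) : {in Frx &, {morph chi : x y / x * y}} ->
  \sum_(a in Frx) chi a = if trivial_on_Frx chi then r.-1%:R else 0.
Proof.
move=> chiM; case: ifP => [/forall_inP chi_eq1 | /negbT/forall_inPn[a Frx_a chi_a_neq1]].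
  by rewrite (eq_bigr (fun _ => 1)) => [|a /chi_eq1/eqP//]; rewrite sumr_const card_Frx.
apply: (sum_mult_eq0 (a := a)) => //; first by case/setD1P: Frx_a.
  by move=> x; rewrite Frx_mull.
by move=> x Frx_x; rewrite chiM.
Qed.

Lemma Frx_V x : (x^-1 \in Frx) = (x \in Frx).
Proof. by rewrite !in_Frx exprVn invr_eq1. Qed.

Lemma Fr_addr a b : a \in Fr -> (b + a \in Fr) = (b \in Fr).
Proof.
move=> Fr_a; apply/idP/idP => [Fr_ba | Fr_b]; last exact: FrD.
by rewrite -(addrK a b) FrD ?FrN.
Qed.

Lemma sum_Fr_shift (G : F -> algC) a :
  a \in Fr -> \sum_(b in Fr) G (b + a) = \sum_(b in Fr) G b.
Proof.
by move=> Fr_a; rewrite [RHS](reindex_inj (addIr a)); apply: eq_bigl => b; rewrite Fr_addr.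
Qed.

Section QuadraticCharacter.

Hypotheses (r_odd : odd r) (two_neq0 : 2%:R != 0 :> F).

Lemma half_r_gt0 : (0 < r./2)%N.
Proof. by rewrite -double_gt0 odd_halfK // predr_gt0. Qed.

Lemma card_roots_half_r : #|[set x : F | x ^+ r./2 == 1]| = r./2.
Proof.
have half_dvd : (r./2 %| #|F|.-1)%N.
  by rewrite (dvdn_trans _ dvdn_predr_card) // -(odd_halfK r_odd) -muln2 dvdn_mulr.
rewrite -[RHS](card_rootsXn_sub1 half_r_gt0 half_dvd); apply: eq_card => x; by rewrite !inE.
Qed.

(* Euler's criterion: both sets have (r - 1)/2 elements, as squaring is at most
   two-to-one. *)
Lemma sqr_Frx : [set z * z | z in Frx] = [set x : F | x ^+ r./2 == 1].
Proof.
apply/eqP; rewrite eqEcard card_roots_half_r; apply/andP; split.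
  apply/subsetP => _ /imsetP[z Frx_z ->].
  by rewrite inE -expr2 -exprM mul2n odd_halfK // -in_Frx.
by rewrite -leq_double odd_halfK // -card_Frx -mul2n card_sqr_imset.
Qed.

Lemma euler_criterion y : y \in Frx ->
  [exists z, in_subfield r z && (z * z == y)] = (y ^+ r./2 == 1).
Proof.
move=> Frx_y; apply/existsP/idP => [[z /andP[Fr_z /eqP def_y]] | root_y].
  have Frx_z : z \in Frx.
    by rewrite !inE Fr_z andbT; apply: contraTneq Frx_y => z0; rewrite -def_y z0 mul0r !inE eqxx.
  by have := imset_f (fun z => z * z) Frx_z; rewrite sqr_Frx def_y inE.
have : y \in [set z * z | z in Frx] by rewrite sqr_Frx inE.
by case/imsetP => z /setD1P[_ Fr_z] ->; exists z; rewrite eqxx andbT; move: Fr_z; rewrite inE.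
Qed.

Lemma qchar_Frx y : y \in Frx -> qchar r y = if y ^+ r./2 == 1 then 1 else -1.
Proof. by move=> Frx_y; rewrite /qchar euler_criterion //; case/setD1P: Frx_y => /negbTE->. Qed.

Lemma expr_half_r_pm1 y : y \in Frx -> (y ^+ r./2 == 1) || (y ^+ r./2 == -1).
Proof. by rewrite in_Frx -sqrf_eq1 -exprM muln2 odd_halfK. Qed.

Lemma qcharM : {in Fr &, {morph qchar r : x y / x * y}}.
Proof.
move=> x y Fr_x Fr_y.
have [-> | x_neq0] := eqVneq x 0; first by rewrite mul0r qchar0 mul0r.
have [-> | y_neq0] := eqVneq y 0; first by rewrite mulr0 qchar0 mulr0.
have Frx_x : x \in Frx by apply/setD1P.
have Frx_y : y \in Frx by apply/setD1P.
have N1_eq1 : (-1 == 1 :> F) = false.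
  by apply/negbTE; rewrite -subr_eq0 -opprD oppr_eq0.
rewrite !qchar_Frx ?Frx_mull // exprMn.
by case/orP: (expr_half_r_pm1 Frx_x) => /eqP->; case/orP: (expr_half_r_pm1 Frx_y) => /eqP->;
  rewrite ?mulrNN ?mulr1 ?mul1r ?eqxx ?N1_eq1 /= ?mulrNN ?mulr1 ?mul1r.
Qed.

Lemma exists_nonsquare : exists2 a, a \in Frx & qchar r a = -1.
Proof.
have /subsetPn[a Frx_a not_root] : ~~ (Frx \subset [set x : F | x ^+ r./2 == 1]).
  apply/negP => /subset_leq_card; rewrite card_Frx card_roots_half_r -(odd_halfK r_odd).
  by rewrite -addnn -{3}[r./2]add0n leq_add2r leqn0 eqn0Ngt half_r_gt0.
by exists a; rewrite // qchar_Frx // (negbTE (_ : _ != 1)) //; move: not_root; rewrite inE.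
Qed.

Lemma qchar1 : qchar r (1 : F) = 1.
Proof. by rewrite qchar_Frx ?in_Frx !expr1n ?eqxx. Qed.

Lemma sum_qchar_Frx : \sum_(a in Frx) qchar r a = 0.
Proof.
have [a Frx_a qchar_a] := exists_nonsquare.
rewrite sum_mult_Frx; last by move=> x y /setD1P[_ Fr_x] /setD1P[_ Fr_y]; exact: qcharM.
by case: ifP => // /forall_inP/(_ a Frx_a); rewrite qchar_a (negbTE algC_N1_neq1).
Qed.

Lemma sum_qchar_Fr_shift a : a \in Fr -> \sum_(b in Fr) qchar r (b + a) = 0.
Proof.
by move=> Fr_a; rewrite sum_Fr_shift // (big_setD1 0) ?Fr0 //= qchar0 add0r sum_qchar_Frx.
Qed.

Lemma sum_qchar_shift_mul a a' : a \in Fr -> a' \in Fr ->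
  \sum_(b in Fr) qchar r (a + b) * qchar r (a' + b) = if a == a' then r.-1%:R else -1.
Proof.
move=> Fr_a Fr_a'; set d := a - a'.
have Fr_d : d \in Fr by rewrite FrD ?FrN.
rewrite -(sum_Fr_shift _ (FrN Fr_a')).
under eq_bigr => c _ do rewrite addrCA -/d [a' + _]addrC subrK.
rewrite (big_setD1 0) ?Fr0 //= qchar0 mulr0 add0r.
have [eq_aa' | a_neq_a'] := eqVneq a a'.
  rewrite /d eq_aa' subrr (eq_bigr (fun _ => 1)) ?sumr_const ?card_Frx // => c /setD1P[c_neq0 _].
  by rewrite addr0 -expr2 qchar_sqr.
have d_neq0 : d != 0 by rewrite subr_eq0.
have Frx_d : d \in Frx by apply/setD1P.
transitivity (\sum_(c in Frx) qchar r (1 + d / c)).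
  apply: eq_bigr => c /setD1P[c_neq0 Fr_c].
  have -> : c + d = c * (1 + d / c) by rewrite mulrDr mulr1 mulrCA divff ?mulr1.
  by rewrite qcharM ?FrD ?FrM ?FrV ?Fr1 // mulrAC -expr2 qchar_sqr // mul1r.
rewrite (reindex_inj (can_inj (divKf d_neq0))) /=.
rewrite (eq_big (mem Frx) (fun c => qchar r (c + 1))) => [|c|c _]; first last.
- by rewrite divKf // addrC.
- by rewrite Frx_mull // Frx_V.
have := sum_qchar_Fr_shift Fr1; rewrite (big_setD1 0) ?Fr0 //= add0r qchar1.
by move/eqP; rewrite addrC addr_eq0 => /eqP.
Qed.

Section CharacterSums.

Variable phi : F -> algC.
Hypotheses (phiM : mult_char phi) (phi_nontriv : nontrivial_char phi).

Definition fiber_sum a := \sum_(x | (x != 0) && (trace r s x == a)) phi x.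

Definition jacobi_sum b := \sum_(a in Frx) qchar r (a + b) * phi a.

Lemma fiber_sumZ a : a \in Frx -> fiber_sum a = phi a * fiber_sum 1.
Proof.
case/setD1P=> a_neq0 Fr_a; rewrite /fiber_sum (reindex_inj (mulfI a_neq0)) mulr_sumr /=.
apply: eq_big => x.
  by rewrite mulf_eq0 negb_or a_neq0 traceZ // -{2}[a]mulr1 (inj_eq (mulfI a_neq0)).
by rewrite mulf_eq0 negb_or a_neq0 => /andP[x_neq0 _]; rewrite phiM.1.
Qed.

Lemma sum_fiber_sum : \sum_(a in Fr) fiber_sum a = 0.
Proof. by rewrite -partition_trace sum_mult_char_eq0. Qed.

Lemma fiber_sum_trace_conjC y : y != 0 ->
  fiber_sum (trace r s y) * (phi y)^* =
  \sum_(z | (z != 0) && (trace r s (y * (z - 1)) == 0)) phi z.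
Proof.
move=> y_neq0; rewrite /fiber_sum (reindex_inj (mulfI y_neq0)) mulr_suml /=.
apply: eq_big => z; first by rewrite mulf_eq0 negb_or y_neq0 mulrBr mulr1 traceB subr_eq0.
rewrite mulf_eq0 negb_or y_neq0 => /andP[z_neq0 _].
by rewrite phiM.1 // mulrAC mult_char_mul_conjC // mul1r.
Qed.

Lemma sum_fiber_sum_norm :
  \sum_(a in Fr) `|fiber_sum a| ^+ 2 = (r ^ s)%:R - (r ^ s.-1)%:R.
Proof.
have normS a : `|fiber_sum a| ^+ 2 =
    \sum_(y | (y != 0) && (trace r s y == a)) fiber_sum (trace r s y) * (phi y)^*.
  by rewrite normCK {2}/fiber_sum rmorph_sum mulr_sumr; apply: eq_bigr => y /andP[_ /eqP->].
rewrite (eq_bigr _ (fun a _ => normS a)) -partition_trace.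
rewrite (eq_bigr _ (fun y (y_neq0 : y != 0) => fiber_sum_trace_conjC y_neq0)).
(* The coefficient of phi z counts the y != 0 with Tr (y (z - 1)) = 0. *)
under eq_bigr => y _ do rewrite big_mkcondr /=.
rewrite exchange_big /=.
under eq_bigr => z _ do rewrite -big_mkcondr /= sumr_const -cardsE card_trace_mul_eq0 subr_eq0.
have sum_neq1 : \sum_(z | (z != 0) && (z != 1)) phi z = -1.
  apply/eqP; rewrite -addr_eq0 addrC -(mult_char1 phiM) -bigD1 ?oner_neq0 //.
  exact/eqP/sum_mult_char_eq0.
rewrite (bigD1 1) ?oner_neq0 //= eqxx mult_char1 //.
rewrite (eq_bigr (fun z => phi z *+ (r ^ s.-1).-1)) => [|z /andP[_ /negbTE->] //].
rewrite sumrMnl sum_neq1 mulNrn cardF !natr_pred ?expn_gt0 ?r_gt0 //.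
by rewrite opprB addrA subrK.
Qed.

Lemma jacobi_sumZ b : b \in Frx -> jacobi_sum b = qchar r b * phi b * jacobi_sum 1.
Proof.
move=> Frx_b; have /setD1P[b_neq0 Fr_b] := Frx_b.
rewrite /jacobi_sum (reindex_inj (mulfI b_neq0)) mulr_sumr /=.
apply: eq_big => [a | a]; first by rewrite Frx_mull.
rewrite Frx_mull // => /setD1P[a_neq0 Fr_a].
by rewrite -{2}[b]mulr1 -mulrDr qcharM ?FrD ?Fr1 // phiM.1 // mulrACA.
Qed.

Lemma sum_jacobi_sum_norm :
  \sum_(b in Fr) `|jacobi_sum b| ^+ 2 = (r * r.-1)%:R - `|\sum_(a in Frx) phi a| ^+ 2.
Proof.
set T := \sum_(a in Frx) phi a.
have normJ b : `|jacobi_sum b| ^+ 2 = \sum_(a in Frx) \sum_(a' in Frx)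
    qchar r (a + b) * qchar r (a' + b) * (phi a * (phi a')^*).
  rewrite normCK /jacobi_sum rmorph_sum big_distrl; apply: eq_bigr => a _.
  by rewrite big_distrr; apply: eq_bigr => a' _ /=; rewrite rmorphM /= conjC_qchar mulrACA.
rewrite (eq_bigr _ (fun b _ => normJ b)) exchange_big /=.
transitivity (\sum_(a in Frx) (r%:R * (phi a * (phi a)^*) - phi a * T^*)).
  apply: eq_bigr => a Frx_a; have /setD1P[_ Fr_a] := Frx_a; rewrite exchange_big /=.
  under eq_bigr => a' /setD1P[_ Fr_a'] do rewrite -mulr_suml sum_qchar_shift_mul //.
  rewrite (bigD1 a) //= eqxx.
  rewrite (eq_bigr (fun a' => - (phi a * (phi a')^*))) => [|a' /andP[_ a'_neq_a]]; last first.
    by rewrite eq_sym (negbTE a'_neq_a) mulN1r.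
  rewrite sumrN /T rmorph_sum mulr_sumr [X in _ = _ - X](bigD1 a) //= natr_pred ?r_gt0 //.
  ring.
rewrite sumrB -mulr_suml -mulr_sumr normCK natrM.
rewrite (eq_bigr (fun _ => 1)) => [|a /setD1P[a_neq0 _]]; last exact: mult_char_mul_conjC.
by rewrite sumr_const card_Frx.
Qed.

Definition mixed_char_sum := \sum_(x | x != 0) phi x * qchar r (trace r s (x + 1)).

Lemma mixed_char_sumE :
  mixed_char_sum = qchar r (s%:R : F) * fiber_sum 0 + fiber_sum 1 * jacobi_sum s%:R.
Proof.
rewrite /mixed_char_sum; under eq_bigr => x _ do rewrite traceD trace1.
rewrite partition_trace (eq_bigr (fun a => qchar r (a + s%:R) * fiber_sum a)) => [|a _].
  rewrite (big_setD1 0) ?Fr0 //= add0r /jacobi_sum mulr_sumr; congr (_ + _).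
  by apply: eq_bigr => a Frx_a; rewrite fiber_sumZ // mulrA mulrC.
by rewrite /fiber_sum mulr_sumr; apply: eq_bigr => x /andP[_ /eqP->]; rewrite mulrC.
Qed.

Lemma fiber_sum0 : fiber_sum 0 = - (\sum_(a in Frx) phi a) * fiber_sum 1.
Proof.
have := sum_fiber_sum; rewrite (big_setD1 0) ?Fr0 //=.
under eq_bigr => a Frx_a do rewrite fiber_sumZ //.
by rewrite -mulr_suml => /eqP; rewrite addr_eq0 => /eqP->; rewrite mulNr.
Qed.

Lemma sqr_norm_fiber_sums :
  `|fiber_sum 0| ^+ 2 + r.-1%:R * `|fiber_sum 1| ^+ 2 = (r ^ s)%:R - (r ^ s.-1)%:R.
Proof.
rewrite -sum_fiber_sum_norm (big_setD1 0) ?Fr0 //=; congr (_ + _).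
rewrite -card_Frx -sumr_const mulr_suml; apply: eq_bigr => a /[dup] Frx_a /setD1P[a_neq0 _].
by rewrite [fiber_sum a]fiber_sumZ // normrM (norm_mult_char phiM) // !mul1r.
Qed.

Lemma sqr_norm_jacobi_sums :
  `|jacobi_sum 0| ^+ 2 + r.-1%:R * `|jacobi_sum 1| ^+ 2 =
  (r * r.-1)%:R - `|\sum_(a in Frx) phi a| ^+ 2.
Proof.
rewrite -sum_jacobi_sum_norm (big_setD1 0) ?Fr0 //=; congr (_ + _).
rewrite -card_Frx -sumr_const mulr_suml; apply: eq_bigr => b /[dup] Frx_b /setD1P[b_neq0 _].
by rewrite [jacobi_sum b]jacobi_sumZ // !normrM norm_qchar // (norm_mult_char phiM) // !mul1r.
Qed.

Lemma jacobi_sum0_conjC :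
  (jacobi_sum 0)^* = if trivial_on_Frx (fun a => qchar r a * (phi a)^*) then r.-1%:R else 0.
Proof.
rewrite /jacobi_sum rmorph_sum -sum_mult_Frx => [|x y /setD1P[x_neq0 Fr_x] /setD1P[y_neq0 Fr_y]].
  by apply: eq_bigr => a _; rewrite addr0 rmorphM /= conjC_qchar.
by rewrite qcharM // phiM.1 // rmorphM /= mulrACA.
Qed.

Lemma sum_phi_Frx : \sum_(a in Frx) phi a = if trivial_on_Frx phi then r.-1%:R else 0.
Proof. by apply: sum_mult_Frx => x y /setD1P[x_neq0 _] /setD1P[y_neq0 _]; exact: phiM.1. Qed.

Lemma sqr_norm_mixed_char_sum_trivial :
  s%:R != 0 :> F -> trivial_on_Frx phi -> `|mixed_char_sum| ^+ 2 = (r ^ s)%:R.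
Proof.
move=> s_neq0 phi_triv; have Frx_s := s_in_Frx s_neq0.
have sum_phi : \sum_(a in Frx) phi a = r%:R - 1 by rewrite sum_phi_Frx phi_triv natr_pred ?r_gt0.
have jacobi_s : jacobi_sum s%:R = - qchar r (s%:R : F).
  have /setD1P[_ Fr_s] := Frx_s.
  have := sum_qchar_Fr_shift Fr_s; rewrite (big_setD1 0) ?Fr0 //= add0r => /eqP.
  rewrite addrC addr_eq0 => /eqP <-; apply: eq_bigr => a Frx_a.
  by move/forall_inP: phi_triv => /(_ a Frx_a)/eqP->; rewrite mulr1.
have r_sqr_norm : r%:R * `|fiber_sum 1| ^+ 2 = (r ^ s.-1)%:R.
  have := sqr_norm_fiber_sums.
  rewrite fiber_sum0 sum_phi_Frx phi_triv normrM normrN normr_nat exprMn natr_exp_s.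
  rewrite natr_pred ?r_gt0 //.
  move=> sqr_norms; apply: (mulfI (natr_predr_neq0 algC)); rewrite natr_pred ?r_gt0 //.
  transitivity ((r%:R - 1) ^+ 2 * `|fiber_sum 1| ^+ 2 + (r%:R - 1) * `|fiber_sum 1| ^+ 2).
    by ring.
  by rewrite sqr_norms; ring.
have -> : mixed_char_sum = - (r%:R * qchar r (s%:R : F) * fiber_sum 1).
  by rewrite mixed_char_sumE fiber_sum0 sum_phi_Frx phi_triv jacobi_s natr_pred ?r_gt0 //; ring.
rewrite normrN !normrM normr_nat norm_qchar // mulr1 exprMn expr2 -mulrA r_sqr_norm.
by rewrite natr_exp_s.
Qed.

Lemma sqr_norm_mixed_char_sum_nontrivial : s%:R != 0 :> F -> ~~ trivial_on_Frx phi ->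
  `|mixed_char_sum| ^+ 2 = (r ^ s.-1)%:R * `|jacobi_sum 1| ^+ 2.
Proof.
move=> s_neq0 phi_nontriv_Frx.
have fiber_sum0_eq0 : fiber_sum 0 = 0.
  by rewrite fiber_sum0 sum_phi_Frx (negbTE phi_nontriv_Frx) oppr0 mul0r.
have sqr_norm_fiber_sum1 : `|fiber_sum 1| ^+ 2 = (r ^ s.-1)%:R.
  have := sqr_norm_fiber_sums; rewrite fiber_sum0_eq0 normr0 expr0n add0r natr_exp_s.
  move=> sqr_norms; apply: (mulfI (natr_predr_neq0 algC)).
  by rewrite sqr_norms natr_pred ?r_gt0 //; ring.
rewrite mixed_char_sumE fiber_sum0_eq0 mulr0 add0r normrM exprMn sqr_norm_fiber_sum1.
by rewrite jacobi_sumZ ?s_in_Frx // !normrM norm_qchar // (norm_mult_char phiM) // !mul1r.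
Qed.

Lemma sqr_norm_jacobi_sum1 : ~~ trivial_on_Frx phi ->
  `|jacobi_sum 1| ^+ 2 = if trivial_on_Frx (fun a => qchar r a * (phi a)^*) then 1 else r%:R.
Proof.
move=> phi_nontriv_Frx; have := sqr_norm_jacobi_sums.
rewrite sum_phi_Frx (negbTE phi_nontriv_Frx) normr0 expr0n subr0 -norm_conjC jacobi_sum0_conjC.
case: ifP => _; rewrite ?normr0 ?normr_nat ?expr0n ?add0r natrM => sqr_norms;
  apply: (mulfI (natr_predr_neq0 algC)).
  by apply: (addrI (r.-1%:R ^+ 2)); rewrite sqr_norms natr_pred ?r_gt0 //; ring.
by rewrite sqr_norms mulrC.
Qed.

Theorem sqr_norm_mixed_char_sum : s%:R != 0 :> F ->
  `|mixed_char_sum| ^+ 2 = if trivial_on_Frx (fun a => qchar r a * (phi a)^*)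
                           then (r ^ s.-1)%:R else (r ^ s)%:R.
Proof.
move=> s_neq0; have [phi_triv | phi_nontriv_Frx] := boolP (trivial_on_Frx phi).
  rewrite sqr_norm_mixed_char_sum_trivial //; case: ifP => // /forall_inP etaphi_triv.
  have [a Frx_a qchar_a] := exists_nonsquare.
  have /eqP phi_a := forall_inP phi_triv a Frx_a.
  by have := etaphi_triv a Frx_a; rewrite qchar_a phi_a conjC1 mulr1 (negbTE algC_N1_neq1).
rewrite sqr_norm_mixed_char_sum_nontrivial // sqr_norm_jacobi_sum1 //.
by case: ifP; rewrite ?mulr1 // mulrC -natr_exp_s.
Qed.

End CharacterSums.

End QuadraticCharacter.
End FixedField.

Theorem mainTheorem4 (p t s : nat) (F : finFieldType) (phi : F -> algC) :
  prime p -> odd p -> (0 < t)%N -> (0 < s)%N -> ~~ (p %| s)%N ->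
  #|F| = ((p ^ t) ^ s)%N ->
  mult_char phi -> nontrivial_char phi ->
  let r := (p ^ t)%N in
  let q := (r ^ s)%N in
  let A := \sum_(x : F | x != 0) phi x * qchar r (trace r s (x + 1)) in
  let etaphibar_trivial :=
    forall y : F, y != 0 -> in_subfield r y -> qchar r y * (phi y)^* = 1 in
  (~ etaphibar_trivial -> `|A| = sqrtC q%:R) /\
  (etaphibar_trivial -> `|A| = sqrtC q%:R / sqrtC r%:R).
Proof.
move=> p_prime p_odd t_gt0 s_gt0 p_ndvd_s cardF phiM phi_nontriv r q A etaphibar_trivial.
have p_char : p \in [pchar F] by apply: (card_finPcharP (n := t * s)); rewrite // expnM.
have r_gt1 : (1 < r)%N by rewrite -(expn0 p) ltn_exp2l ?prime_gt1.
have exprD_r (x y : F) : (x + y) ^+ r = x ^+ r + y ^+ r.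
  by rewrite exprDn_pchar // (eq_pnat _ (pcharf_eq p_char)) pnatX pnat_id.
have two_neq0 : 2%:R != 0 :> F.
  by rewrite -(dvdn_pcharf p_char) dvdn_prime2 //; apply: contraTneq p_odd => ->.
have s_neq0 : s%:R != 0 :> F by rewrite -(dvdn_pcharf p_char).
have r_odd : odd r by rewrite oddX p_odd orbT.
have := sqr_norm_mixed_char_sum r_gt1 s_gt0 cardF exprD_r r_odd two_neq0 phiM phi_nontriv s_neq0.
set b := trivial_on_Frx r _ => sqr_norm_A.
have E_iff : etaphibar_trivial <-> b.
  split => [E | /forall_inP b_true y y_neq0 Fr_y]; last first.
    by apply/eqP/b_true; apply/setD1P; rewrite inE.
  by apply/forall_inP => a /setD1P[a_neq0]; rewrite inE => Fr_a; apply/eqP/E.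
have sqrtC_r_neq0 : sqrtC r%:R != 0 :> algC by rewrite sqrtC_eq0 pnatr_eq0 -lt0n ltnW.
split => [not_E | /E_iff b_true]; rewrite -[LHS]sqrCK // sqr_norm_A.
  by case: ifP => // /E_iff.
by rewrite b_true /q (natr_exp_s _ s_gt0) sqrtCM ?nnegrE ?ler0n // mulrC mulKf.
Qed.
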